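(* Let $P=(p_1,\dots,p_l)$ be a distribution on $\{x_1,\dots,x_l\}$ with $p_j\in(0,1)$ for all $j$, and let $\hat P=(\hat p_j)_{j=1}^l$ be the empirical distribution constructed from $T\ge 1$ i.i.d. draws from $P$. Define $\rho_1(p)\coloneqq\sqrt{(1-p)/p}$, $\rho_2(p)\coloneqq\rho_1(p)+\rho_1(1-p)$, $c^{(s)}\coloneqq\sum_{j=1}^l\rho_1(p_j)$, and $\tilde c^{(s)}\coloneqq\max\{\rho_2(p_S): S\subset[l],\,1\le |S|<l\}$ where $p_S\coloneqq\sum_{j\in S}p_j$. Then there exist constants $C^{(s)},\tilde C^{(s)}\ge 0$ depending only on $P$ (not on $T$) such that for every $T\ge1$, $$\tilde c^{(s)}\sqrt{\frac{1}{2\pi T}}-\frac{\tilde C^{(s)}}{T}\;\le\;\mathbb E\big[D_s(\hat P,P)\big]\;\le\; c^{(s)}\sqrt{\frac{1}{2\pi T}}+\frac{C^{(s)}}{T}.$$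
   Context: The separation distance between distributions $P$ and $Q$ on $\{x_1,\dots,x_l\}$ with all $q_j>0$ is $D_s(P,Q)\coloneqq\max_{j\in[l]}(1-p_j/q_j)$; thus $D_s(\hat P,P)=\max_j(1-\hat p_j/p_j)$. The empirical distribution has $\hat p_j=T_j/T$ where $T_j$ is the number of draws equal to $x_j$. *)

From Stdlib Require Import Reals Lra List Arith.
Import ListNotations.
Open Scope R_scope.

(* Outcomes x_1..x_l are encoded as indices 0..l-1; the distribution P is
   given by p : nat -> R (only p 0 .. p (l-1) are relevant). *)

Definition sumR (xs : list R) : R := fold_right Rplus 0 xs.

Fixpoint all_seqs (l T : nat) : list (list nat) :=
  match T with
  | O => [[]]
  | S T' => flat_map (fun s => map (fun j => j :: s) (seq 0 l)) (all_seqs l T')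
  end.

Definition seq_prob (p : nat -> R) (s : list nat) : R :=
  fold_right (fun j acc => p j * acc) 1 s.

Definition emp (s : list nat) (j : nat) : R :=
  INR (count_occ Nat.eq_dec s j) / INR (length s).

Definition maxn_R (f : nat -> R) (n : nat) : R :=
  fold_right (fun j acc => Rmax (f j) acc) (f 0%nat) (seq 0 n).

Definition sep_dist (l : nat) (p' q : nat -> R) : R :=
  maxn_R (fun j => 1 - p' j / q j) l.

Definition exp_sep (l : nat) (p : nat -> R) (T : nat) : R :=
  sumR (map (fun s => seq_prob p s * sep_dist l (emp s) p) (all_seqs l T)).

Definition rho1 (x : R) : R := sqrt ((1 - x) / x).
Definition rho2 (x : R) : R := rho1 x + rho1 (1 - x).

Definition c_s (l : nat) (p : nat -> R) : R :=
  sumR (map (fun j => rho1 (p j)) (seq 0 l)).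

(* subsets of [l] as boolean masks of length l *)
Fixpoint all_masks (n : nat) : list (list bool) :=
  match n with
  | O => [[]]
  | S n' => flat_map (fun b => [true :: b; false :: b]) (all_masks n')
  end.

Definition mask_card (b : list bool) : nat := count_occ Bool.bool_dec b true.

Definition p_S (l : nat) (p : nat -> R) (b : list bool) : R :=
  sumR (map (fun j => if nth j b false then p j else 0) (seq 0 l)).

(* max { rho2(p_S) : S subset [l], 1 <= |S| < l }; rho2 >= 0 and the index
   set is nonempty when l >= 2, so the base value 0 is harmless. *)
Definition ct_s (l : nat) (p : nat -> R) : R :=
  fold_right (fun b acc => Rmax (rho2 (p_S l p b)) acc) 0
    (filter (fun b => andb (Nat.leb 1 (mask_card b)) (Nat.ltb (mask_card b) l))
       (all_masks l)).

(* Projecting the draws onto a set [A] of outcomes makes the number of draws in [A]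
   binomial with parameter [p_A].  Above, [D_s <= sum_j (1 - hat p_j / p_j)^+]; below, for every
   proper nonempty [S], averaging over [S] and over its complement gives
   [D_s >= (1 - hat p_S / p_S)^+ + (1 - hat p_(S^c) / p_(S^c))^+] (at most one term is nonzero).
   For [X ~ Bin(T, q)], De Moivre's identity [E (T q - X)^+ = T q (1 - q) b(T - 1, floor (T q), q)]
   turns both expectations into single binomial probabilities, and Stirling's formula with an
   explicit error (obtained from Wallis' integrals) gives
   [b(T - 1, floor (T q), q) = 1 / sqrt (2 PI T q (1 - q)) + O(1 / T)].
   Since [rho1 q = (1 - q) / sqrt (q (1 - q))] and [rho2 q = 1 / sqrt (q (1 - q))], this yields both
   bounds. *)

From Stdlib Require Import Reals Lra Lia Arith List Factorial.
Import ListNotations.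
From Coquelicot Require Import Coquelicot.
Open Scope R_scope.

Lemma ln_le_sub1 x : 0 < x -> ln x <= x - 1.
Proof. intros Hx. pose proof (exp_ineq1_le (ln x)) as H. rewrite exp_ln in H; lra. Qed.

Lemma one_sub_inv_le_ln x : 0 < x -> 1 - / x <= ln x.
Proof.
  intros Hx. pose proof (ln_le_sub1 (/ x) (Rinv_0_lt_compat _ Hx)) as H.
  rewrite ln_Rinv in H; lra.
Qed.

Lemma INR_fact_pos n : 0 < INR (fact n).
Proof. apply lt_0_INR, lt_O_fact. Qed.

Lemma ln_sqrt x : 0 < x -> ln (sqrt x) = ln x / 2.
Proof.
  intros Hx. pose proof (sqrt_lt_R0 x Hx).
  apply (Rmult_eq_reg_l 2); [|lra].
  replace (2 * ln (sqrt x)) with (ln (sqrt x * sqrt x)) by (rewrite ln_mult; lra).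
  rewrite sqrt_sqrt by lra. field.
Qed.

Lemma pow_unit_interval x n : 0 <= x <= 1 -> 0 <= x ^ n <= 1.
Proof. intros Hx. split; [apply pow_le; lra|]. rewrite <- (pow1 n). apply pow_incr. lra. Qed.

Lemma one_sub_sqrt_le x : 0 <= x <= 1 -> 0 <= 1 - sqrt x <= 1 - x.
Proof.
  intros Hx.
  assert (Hs : sqrt x <= 1) by (rewrite <- sqrt_1; apply sqrt_le_1_alt; lra).
  pose proof (sqrt_pos x). pose proof (sqrt_sqrt x (proj1 Hx)).
  nra.
Qed.

Lemma ln_near_1 y e : Rabs (y - 1) <= e <= 1/2 -> Rabs (ln y) <= 2 * e.
Proof.
  intros [Hy He]. apply Rabs_le_between in Hy.
  assert (Hpos : 0 < y) by lra.
  pose proof (ln_le_sub1 _ Hpos). pose proof (one_sub_inv_le_ln _ Hpos).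
  assert (- (2 * e) <= 1 - / y).
  { replace (1 - / y) with ((y - 1) / y) by (field; lra).
    apply Rle_div_r; [lra|]. nra. }
  apply Rabs_le_between. lra.
Qed.

Lemma exp_near_0 e : Rabs e <= 1/2 -> Rabs (exp e - 1) <= 2 * Rabs e.
Proof.
  intros H. apply Rabs_le_between in H.
  pose proof (exp_ineq1_le e). pose proof (exp_ineq1_le (- e)) as H'.
  rewrite exp_Ropp in H'. pose proof (exp_pos e).
  assert (exp e * (1 - e) <= 1).
  { apply Rmult_le_reg_l with (/ exp e); [apply Rinv_0_lt_compat; lra|].
    field_simplify; lra. }
  apply Rabs_le_between. unfold Rabs. destruct (Rcase_abs e); nra.
Qed.

Lemma Rmax_0_div x d : 0 < d -> Rmax 0 (x / d) = Rmax 0 x / d.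
Proof.
  intros Hd. destruct (Rle_dec 0 x) as [Hx|Hx].
  - rewrite !Rmax_right; [reflexivity | assumption | apply Rdiv_le_0_compat; assumption].
  - rewrite !Rmax_left; [unfold Rdiv; ring | lra |].
    apply Rlt_le, Rdiv_neg_pos; lra.
Qed.

Lemma sumR_app (a b : list R) : sumR (a ++ b) = sumR a + sumR b.
Proof. induction a as [|x a IH]; simpl; [ring | rewrite IH; ring]. Qed.

Lemma sumR_map_plus {X} (f g : X -> R) L :
  sumR (map (fun x => f x + g x) L) = sumR (map f L) + sumR (map g L).
Proof. induction L as [|x L IH]; simpl; [ring | rewrite IH; ring]. Qed.

Lemma sumR_map_scal {X} (f : X -> R) c L : sumR (map (fun x => c * f x) L) = c * sumR (map f L).
Proof. induction L as [|x L IH]; simpl; [ring | rewrite IH; ring]. Qed.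

Lemma sumR_map_const {X} (c : R) (L : list X) : sumR (map (fun _ => c) L) = INR (length L) * c.
Proof. induction L as [|x L IH]; simpl length; rewrite ?S_INR; simpl; [ring | rewrite IH; ring]. Qed.

Lemma sumR_map_ext_in {X} (f g : X -> R) L :
  (forall x, In x L -> f x = g x) -> sumR (map f L) = sumR (map g L).
Proof. intros H. f_equal. apply map_ext_in. exact H. Qed.

Lemma sumR_map_le {X} (f g : X -> R) L :
  (forall x, In x L -> f x <= g x) -> sumR (map f L) <= sumR (map g L).
Proof.
  induction L as [|x L IH]; intros H; simpl; [lra|].
  apply Rplus_le_compat; [apply H; simpl; auto | apply IH; intros y Hy; apply H; simpl; auto].
Qed.

Lemma sumR_map_nonneg {X} (f : X -> R) L : (forall x, In x L -> 0 <= f x) -> 0 <= sumR (map f L).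
Proof.
  intros H. rewrite <- (Rmult_0_l (INR (length L))), Rmult_comm, <- sumR_map_const.
  apply sumR_map_le. exact H.
Qed.

Lemma sumR_map_ge_term {X} (f : X -> R) L x :
  In x L -> (forall y, In y L -> 0 <= f y) -> f x <= sumR (map f L).
Proof.
  induction L as [|a L IH]; intros Hx H; simpl in *; [contradiction|].
  assert (0 <= f a) by auto.
  assert (0 <= sumR (map f L)) by (apply sumR_map_nonneg; auto).
  destruct Hx as [<-|Hx]; [lra|]. pose proof (IH Hx ltac:(auto)). lra.
Qed.

Lemma sumR_flat_map {X Y} (F : Y -> R) (G : X -> list Y) L :
  sumR (map F (flat_map G L)) = sumR (map (fun x => sumR (map F (G x))) L).
Proof. induction L as [|x L IH]; simpl; [reflexivity | rewrite map_app, sumR_app, IH; reflexivity]. Qed.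

Lemma sumR_swap {X Y} (F : X -> Y -> R) L1 L2 :
  sumR (map (fun x => sumR (map (fun y => F x y) L2)) L1)
  = sumR (map (fun y => sumR (map (fun x => F x y) L1)) L2).
Proof.
  induction L1 as [|x L1 IH]; simpl.
  - induction L2 as [|y L2 IH2]; simpl; [reflexivity | rewrite <- IH2; ring].
  - rewrite IH, <- sumR_map_plus. reflexivity.
Qed.

Lemma sumR_map_filter {X} (A : X -> bool) (f : X -> R) L :
  sumR (map f (filter A L)) = sumR (map (fun x => if A x then f x else 0) L).
Proof. induction L as [|x L IH]; simpl; [reflexivity | destruct (A x); simpl; rewrite IH; ring]. Qed.

Lemma exists_le_of_sumR_le {X} (e w : X -> R) r L : L <> [] ->
  sumR (map e L) <= r * sumR (map w L) -> exists x, In x L /\ e x <= r * w x.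
Proof.
  induction L as [|x L IH]; intros Hne Hle; [congruence|].
  destruct (Rle_dec (e x) (r * w x)) as [Hx|Hx]; [exists x; simpl; auto|].
  destruct L as [|y L'].
  - simpl in Hle. lra.
  - destruct IH as [z [Hz Hez]]; [discriminate | simpl in *; lra | exists z; simpl; auto].
Qed.

Lemma sumR_indicator_seq (v : nat -> R) x a n :
  sumR (map (fun j => if x =? j then v j else 0) (seq a n))
  = if ((a <=? x) && (x <? a + n))%bool then v x else 0.
Proof.
  revert a. induction n as [|n IH]; intros a; simpl.
  - rewrite Nat.add_0_r. destruct (Nat.leb_spec a x), (Nat.ltb_spec x a); simpl; auto; lia.
  - rewrite IH. destruct (Nat.eqb_spec x a) as [->|Hn].
    + rewrite Nat.leb_refl, (proj2 (Nat.ltb_lt a (a + S n))), (proj2 (Nat.leb_gt (S a) a)) by lia.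
      simpl. ring.
    + destruct (Nat.leb_spec (S a) x), (Nat.leb_spec a x), (Nat.ltb_spec x (S a + n)),
        (Nat.ltb_spec x (a + S n)); simpl; try ring; lia.
Qed.

Lemma sum_f_R0_scal (f : nat -> R) c n : sum_f_R0 (fun i => c * f i) n = c * sum_f_R0 f n.
Proof. rewrite scal_sum. apply sum_eq. intros. ring. Qed.

Lemma fold_Rmax_ge {X} (F : X -> R) b L x :
  In x L -> F x <= fold_right (fun y acc => Rmax (F y) acc) b L.
Proof.
  induction L as [|y L IH]; simpl; intros H; [contradiction|].
  destruct H as [->|H]; [apply Rmax_l | eapply Rle_trans; [apply IH, H | apply Rmax_r]].
Qed.

Lemma fold_Rmax_le {X} (F : X -> R) b L B :
  b <= B -> (forall x, In x L -> F x <= B) -> fold_right (fun y acc => Rmax (F y) acc) b L <= B.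
Proof.
  intros Hb H. induction L as [|y L IH]; simpl; [assumption|].
  apply Rmax_lub; [apply H; simpl; auto | apply IH; intros; apply H; simpl; auto].
Qed.

Lemma uniform_bound {X} (P : X -> R -> Prop) L :
  (forall x K K', K <= K' -> P x K -> P x K') ->
  (forall x, In x L -> exists K, 0 <= K /\ P x K) ->
  exists K, 0 <= K /\ forall x, In x L -> P x K.
Proof.
  intros Hmono. induction L as [|x L IH]; intros H.
  - exists 0. split; [lra | intros _ []].
  - destruct IH as [K1 [HK1 H1]]; [intros; apply H; simpl; auto|].
    destruct (H x ltac:(simpl; auto)) as [K2 [HK2 H2]].
    exists (K1 + K2). split; [lra|]. intros y [<-|Hy].
    + apply (Hmono _ K2); [lra | exact H2].
    + apply (Hmono _ K1); [lra | auto].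
Qed.

(** * Stirling's formula with explicit error *)

Lemma ln_ratio_cubic_bound t : 0 < t <= 1/3 ->
  0 <= ln (1 + t) - ln (1 - t) - 2 * t <= 9/4 * t ^ 3.
Proof.
  intros Ht.
  destruct (MVT_cor2 (fun x => ln (1 + x) - ln (1 - x) - 2 * x)
              (fun x => / (1 + x) + / (1 - x) - 2) 0 t) as [c [Hc Hct]]; [lra| |].
  { intros c Hc. apply is_derive_Reals. auto_derive.
    - repeat split; lra.
    - field. lra. }
  rewrite Rplus_0_r, Rminus_0_r, ln_1 in Hc.
  replace (ln (1 + t) - ln (1 - t) - 2 * t)
    with ((/ (1 + c) + / (1 - c) - 2) * t) by lra.
  replace (/ (1 + c) + / (1 - c) - 2) with (2 * c ^ 2 / (1 - c ^ 2)) by (field; repeat split; simpl; nra).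
  assert (Hc2 : 0 <= c ^ 2 <= t ^ 2) by (simpl; nra).
  assert (Hden : 8/9 <= 1 - c ^ 2) by (simpl in *; nra).
  assert (Hq : 0 <= 2 * c ^ 2 / (1 - c ^ 2) <= 9/4 * c ^ 2).
  { split.
    - apply Rdiv_le_0_compat; lra.
    - apply Rle_div_l; [lra|]. nra. }
  replace (t ^ 3) with (t ^ 2 * t) by ring. nra.
Qed.

(* [ln n! - ln (n^n e^-n sqrt n)], which decreases to [ln_sqrt_2PI] (Stirling's formula). *)
Definition stirling_err (n : nat) : R :=
  ln (INR (fact n)) - (INR n + /2) * ln (INR n) + INR n.

Definition ln_sqrt_2PI : R := (ln 2 + ln PI) / 2.

Lemma stirling_err_step n : (1 <= n)%nat ->
  0 <= stirling_err n - stirling_err (S n) <= 1 / (INR n * INR (S n)).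
Proof.
  intros Hn. assert (Hn' : 1 <= INR n) by (apply (le_INR 1); lia).
  rewrite S_INR.
  set (t := / (2 * INR n + 1)).
  assert (Ht : 0 < t <= 1/3).
  { unfold t. split; [apply Rinv_0_lt_compat; lra|].
    apply Rle_trans with (/ 3); [apply Rinv_le_contravar; lra | lra]. }
  (* [t] is chosen so that [(n + 1) / n = (1 + t) / (1 - t)]. *)
  assert (E : stirling_err n - stirling_err (S n)
              = / (2 * t) * (ln (1 + t) - ln (1 - t) - 2 * t)).
  { unfold stirling_err. rewrite fact_simpl, mult_INR, ln_mult, S_INR
      by first [apply INR_fact_pos | apply lt_0_INR; lia].
    replace (1 + t) with (2 * (INR n + 1) / (2 * INR n + 1)) by (unfold t; field; lra).
    replace (1 - t) with (2 * INR n / (2 * INR n + 1)) by (unfold t; field; lra).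
    rewrite !ln_div, !ln_mult by lra.
    unfold t. field. lra. }
  rewrite E. pose proof (ln_ratio_cubic_bound t Ht) as G.
  assert (0 < / (2 * t)) by (apply Rinv_0_lt_compat; lra).
  split; [apply Rmult_le_pos; lra|].
  apply Rle_trans with (/ (2 * t) * (9/4 * t ^ 3)); [apply Rmult_le_compat_l; lra|].
  replace (/ (2 * t) * (9/4 * t ^ 3)) with (9 / (8 * (2 * INR n + 1) ^ 2))
    by (unfold t; field; lra).
  apply Rle_div_l; [nra|].
  replace (1 / (INR n * (INR n + 1)) * (8 * (2 * INR n + 1) ^ 2))
    with (8 * (4 + 1 / (INR n * (INR n + 1)))) by (field; lra).
  assert (0 < 1 / (INR n * (INR n + 1))) by (apply Rdiv_lt_0_compat; nra).
  lra.
Qed.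

Lemma stirling_err_decr n k : (1 <= n)%nat ->
  0 <= stirling_err n - stirling_err (n + k) <= 1 / INR n - 1 / INR (n + k).
Proof.
  intros Hn. induction k as [|k IH].
  - rewrite Nat.add_0_r. lra.
  - rewrite Nat.add_succ_r.
    pose proof (stirling_err_step (n + k) ltac:(lia)) as [H1 H2].
    assert (1 <= INR (n + k)) by (apply (le_INR 1); lia).
    rewrite S_INR in *.
    replace (1 / (INR (n + k) * (INR (n + k) + 1)))
      with (1 / INR (n + k) - 1 / (INR (n + k) + 1)) in H2 by (field; lra).
    lra.
Qed.

Definition wallis (n : nat) : R := RInt (fun x => sin x ^ n) 0 (PI / 2).

Lemma ex_RInt_sin_pow n a b : ex_RInt (fun x => sin x ^ n) a b.
Proof.
  apply (@ex_RInt_continuous R_CompleteNormedModule). intros x _.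
  apply (@ex_derive_continuous R_AbsRing R_NormedModule). auto_derive. auto.
Qed.

Lemma wallis_0 : wallis 0 = PI / 2.
Proof. unfold wallis. simpl. rewrite RInt_const. unfold scal; simpl; unfold mult; simpl. ring. Qed.

Lemma wallis_1 : wallis 1 = 1.
Proof.
  unfold wallis. rewrite (RInt_ext _ sin) by (intros; simpl; ring).
  rewrite (@is_RInt_unique R_CompleteNormedModule _ _ _ (- cos (PI / 2) - - cos 0)).
  - rewrite cos_PI2, cos_0. ring.
  - apply (@is_RInt_derive R_CompleteNormedModule (fun x => - cos x)).
    + intros x _. auto_derive; auto. ring.
    + intros x _. apply (@ex_derive_continuous R_AbsRing R_NormedModule). auto_derive. auto.
Qed.

(* Integration by parts, with [cos x * sin x ^ (n + 1)] as antiderivative. *)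
Lemma wallis_rec n : INR (n + 2) * wallis (n + 2) = INR (n + 1) * wallis n.
Proof.
  set (f := fun x => INR (n + 1) * sin x ^ n - INR (n + 2) * sin x ^ (n + 2)).
  assert (Hf : is_RInt f 0 (PI / 2)
                 (cos (PI / 2) * sin (PI / 2) ^ (n + 1) - cos 0 * sin 0 ^ (n + 1))).
  { apply (@is_RInt_derive R_CompleteNormedModule (fun x => cos x * sin x ^ (n + 1))).
    - intros x _. auto_derive; auto. unfold f.
      rewrite !plus_INR. replace (n + 1)%nat with (S n) by lia.
      replace (n + 2)%nat with (S (S n)) by lia. simpl.
      pose proof (sin2_cos2 x) as Hs. unfold Rsqr in Hs.
      replace (cos x * (1 * cos x * ((INR n + 1) * sin x ^ n)))
        with ((cos x * cos x) * ((INR n + 1) * sin x ^ n)) by ring.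
      replace (cos x * cos x) with (1 - sin x * sin x) by lra. ring.
    - intros x _. apply (@ex_derive_continuous R_AbsRing R_NormedModule). unfold f.
      auto_derive. auto. }
  rewrite cos_PI2, sin_0, pow_i in Hf by lia.
  apply (@is_RInt_unique R_CompleteNormedModule) in Hf.
  assert (E : RInt f 0 (PI / 2) = INR (n + 1) * wallis n - INR (n + 2) * wallis (n + 2)).
  { unfold f, wallis.
    rewrite (RInt_ext _ (fun x => minus (scal (INR (n + 1)) (sin x ^ n))
                                         (scal (INR (n + 2)) (sin x ^ (n + 2))))) by reflexivity.
    rewrite (@RInt_minus R_CompleteNormedModule).
    - rewrite (@RInt_scal R_CompleteNormedModule) by apply ex_RInt_sin_pow.
      rewrite (@RInt_scal R_CompleteNormedModule) by apply ex_RInt_sin_pow.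
      reflexivity.
    - apply (@ex_RInt_scal R_CompleteNormedModule), ex_RInt_sin_pow.
    - apply (@ex_RInt_scal R_CompleteNormedModule), ex_RInt_sin_pow. }
  rewrite E in Hf. unfold minus, plus, opp in Hf; simpl in Hf. lra.
Qed.

Lemma wallis_decr n : wallis (S n) <= wallis n.
Proof.
  apply RInt_le; [pose proof PI_RGT_0; lra | apply ex_RInt_sin_pow | apply ex_RInt_sin_pow |].
  intros x Hx. simpl.
  assert (0 <= sin x) by (apply sin_ge_0; pose proof PI_RGT_0; lra).
  pose proof (SIN_bound x). pose proof (pow_le (sin x) n).
  nra.
Qed.

Fixpoint central_ratio (k : nat) : R :=
  match k with
  | O => 1
  | S k' => central_ratio k' * (2 * INR k' + 1) / (2 * INR k' + 2)
  end.

Lemma central_ratio_pos k : 0 < central_ratio k.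
Proof.
  induction k as [|k IH]; simpl; [lra|].
  pose proof (pos_INR k). apply Rdiv_lt_0_compat; nra.
Qed.

Lemma central_ratio_fact k :
  central_ratio k = INR (fact (2 * k)) / (INR (fact k) ^ 2 * 4 ^ k).
Proof.
  induction k as [|k IH]; [simpl; field|].
  simpl central_ratio. rewrite IH.
  replace (2 * S k)%nat with (S (S (2 * k))) by lia.
  rewrite !fact_simpl, !mult_INR, !S_INR, mult_INR. simpl.
  pose proof (INR_fact_pos k). pose proof (INR_fact_pos (2 * k)). pose proof (pos_INR k).
  replace (k + (k + 0))%nat with (2 * k)%nat by lia.
  field. repeat split; try lra. apply pow_nonzero; lra.
Qed.

Lemma wallis_even_odd k :
  wallis (2 * k) = PI / 2 * central_ratio k /\
  wallis (2 * k + 1) = 1 / ((2 * INR k + 1) * central_ratio k).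
Proof.
  induction k as [|k [IH1 IH2]].
  - simpl. rewrite wallis_0, wallis_1. split; field.
  - pose proof (pos_INR k). pose proof (central_ratio_pos k).
    pose proof (wallis_rec (2 * k)) as R1. pose proof (wallis_rec (2 * k + 1)) as R2.
    rewrite IH1 in R1. rewrite IH2 in R2.
    replace (INR (2 * k + 2)) with (2 * INR k + 2) in R1 by (rewrite plus_INR, mult_INR; simpl; ring).
    replace (INR (2 * k + 1)) with (2 * INR k + 1) in R1 by (rewrite plus_INR, mult_INR; simpl; ring).
    replace (INR (2 * k + 1 + 2)) with (2 * INR k + 3) in R2 by (rewrite !plus_INR, mult_INR; simpl; ring).
    replace (INR (2 * k + 1 + 1)) with (2 * INR k + 2) in R2 by (rewrite !plus_INR, mult_INR; simpl; ring).
    replace (2 * S k)%nat with (2 * k + 2)%nat by lia.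
    replace (2 * k + 2 + 1)%nat with (2 * k + 1 + 2)%nat by lia.
    simpl central_ratio. rewrite S_INR. split.
    + apply (Rmult_eq_reg_l (2 * INR k + 2)); [|lra]. rewrite R1. field. lra.
    + apply (Rmult_eq_reg_l (2 * INR k + 3)); [|lra]. rewrite R2. field. split; lra.
Qed.

Lemma wallis_bounds k : (1 <= k)%nat ->
  2 * INR k / (2 * INR k + 1) <= PI * INR k * central_ratio k ^ 2 <= 1.
Proof.
  intros Hk. pose proof PI_RGT_0. pose proof (pos_INR k). split.
  - pose proof (wallis_decr (2 * k)) as D. replace (S (2 * k)) with (2 * k + 1)%nat in D by lia.
    destruct (wallis_even_odd k) as [E1 E2]. rewrite E1, E2 in D.
    pose proof (central_ratio_pos k).
    apply Rle_div_l; [lra|].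
    apply (Rmult_le_compat_r (central_ratio k * (2 * INR k + 1))) in D; [|nra].
    replace (1 / ((2 * INR k + 1) * central_ratio k) * (central_ratio k * (2 * INR k + 1)))
      with 1 in D by (field; lra).
    nra.
  - destruct k as [|j]; [lia|].
    pose proof (wallis_decr (2 * j + 1)) as D. replace (S (2 * j + 1)) with (2 * S j)%nat in D by lia.
    destruct (wallis_even_odd (S j)) as [E1 _]. destruct (wallis_even_odd j) as [_ E2].
    rewrite E1, E2 in D.
    pose proof (pos_INR j). pose proof (central_ratio_pos j).
    simpl central_ratio in *. rewrite S_INR. set (c := central_ratio j) in *.
    apply (Rmult_le_compat_r (c * (2 * INR j + 1))) in D; [|nra].
    replace (1 / ((2 * INR j + 1) * c) * (c * (2 * INR j + 1))) with 1 in D by (field; lra).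
    replace (PI * (INR j + 1) * (c * (2 * INR j + 1) / (2 * INR j + 2)) ^ 2)
      with (PI / 2 * (c * (2 * INR j + 1) / (2 * INR j + 2)) * (c * (2 * INR j + 1)))
      by (field; lra).
    exact D.
Qed.

Lemma ln_central_ratio_sq k : (1 <= k)%nat ->
  ln (INR k * central_ratio k ^ 2) = 2 * stirling_err (2 * k) - 4 * stirling_err k + ln 2.
Proof.
  intros Hk. assert (Hk' : 0 < INR k) by (apply lt_0_INR; lia).
  pose proof (INR_fact_pos k). pose proof (INR_fact_pos (2 * k)).
  assert (0 < 4 ^ k) by (apply pow_lt; lra).
  assert (0 < INR (fact k) ^ 2) by (apply pow_lt; lra).
  assert (0 < central_ratio k) by apply central_ratio_pos.
  rewrite ln_mult, ln_pow by (try apply pow_lt; lra).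
  rewrite central_ratio_fact, ln_div, ln_mult, !ln_pow by (try apply Rmult_lt_0_compat; lra).
  replace 4 with (2 * 2) by ring. rewrite ln_mult by lra.
  unfold stirling_err. rewrite mult_INR. replace (INR 2) with 2 by (simpl; ring).
  rewrite ln_mult by lra. field.
Qed.

Lemma wallis_stirling k : (1 <= k)%nat ->
  - (1 / (2 * INR k)) <= 2 * stirling_err (2 * k) - 4 * stirling_err k + 2 * ln_sqrt_2PI <= 0.
Proof.
  intros Hk. assert (Hk' : 0 < INR k) by (apply lt_0_INR; lia).
  pose proof PI_RGT_0. pose proof (central_ratio_pos k).
  assert (Hp : 0 < PI * INR k * central_ratio k ^ 2) by (apply Rmult_lt_0_compat; [nra | apply pow_lt; lra]).
  assert (E : 2 * stirling_err (2 * k) - 4 * stirling_err k + 2 * ln_sqrt_2PI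
              = ln (PI * INR k * central_ratio k ^ 2)).
  { assert (0 < INR k * central_ratio k ^ 2) by (apply Rmult_lt_0_compat; [|apply pow_lt]; lra).
    rewrite Rmult_assoc, ln_mult, ln_central_ratio_sq by (assumption || lra).
    unfold ln_sqrt_2PI. lra. }
  rewrite E. destruct (wallis_bounds k Hk) as [Wl Wu].
  assert (Hr : 0 < 2 * INR k / (2 * INR k + 1)) by (apply Rdiv_lt_0_compat; lra).
  split.
  - eapply Rle_trans; [|apply (ln_le _ _ Hr Wl)].
    eapply Rle_trans; [|apply (one_sub_inv_le_ln _ Hr)].
    right. field. lra.
  - rewrite <- ln_1. apply ln_le; lra.
Qed.

Lemma stirling_err_upper n : (1 <= n)%nat -> stirling_err n <= ln_sqrt_2PI + 1 / INR n.
Proof.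
  intros Hn. assert (0 < INR n) by (apply lt_0_INR; lia).
  pose proof (wallis_stirling n Hn) as [W _].
  pose proof (stirling_err_decr n n Hn) as [D _]. replace (n + n)%nat with (2 * n)%nat in D by lia.
  assert (1 / (2 * INR n) <= 1 / INR n) by (apply Rmult_le_compat_l; [lra | apply Rinv_le_contravar; lra]).
  assert (0 < 1 / (2 * INR n)) by (apply Rdiv_lt_0_compat; lra).
  lra.
Qed.

Lemma stirling_err_lower_approx k : (1 <= k)%nat -> ln_sqrt_2PI <= stirling_err k + 1 / (2 * INR k).
Proof.
  intros Hk. assert (0 < INR k) by (apply lt_0_INR; lia).
  pose proof (wallis_stirling k Hk) as [_ W].
  pose proof (stirling_err_decr k k Hk) as [_ D]. replace (k + k)%nat with (2 * k)%nat in D by lia.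
  replace (INR (2 * k)) with (2 * INR k) in D by (rewrite mult_INR; simpl; ring).
  replace (1 / INR k - 1 / (2 * INR k)) with (1 / (2 * INR k)) in D by (field; lra).
  lra.
Qed.

Lemma stirling_err_lower n : (1 <= n)%nat -> ln_sqrt_2PI <= stirling_err n.
Proof.
  intros Hn. apply Rnot_lt_le. intros Hlt.
  destruct (archimed_cor1 (ln_sqrt_2PI - stirling_err n)) as [j [Hj Hj0]]; [lra|].
  pose proof (stirling_err_lower_approx (n + j) ltac:(lia)) as Hnj.
  pose proof (stirling_err_decr n j Hn) as [D _].
  assert (0 < INR j) by (apply lt_0_INR; lia).
  assert (1 / (2 * INR (n + j)) <= / INR j).
  { rewrite plus_INR. pose proof (pos_INR n). unfold Rdiv. rewrite Rmult_1_l.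
    apply Rinv_le_contravar; lra. }
  lra.
Qed.

(** * Binomial probabilities near the mean *)

Definition binom_pmf (N m : nat) (q : R) : R := Binomial.C N m * q ^ m * (1 - q) ^ (N - m).

Definition normal_peak (n q : R) : R := / sqrt (2 * PI * n * q * (1 - q)).

Lemma binom_pmf_pos N m q : 0 < q < 1 -> 0 < binom_pmf N m q.
Proof.
  intros Hq. unfold binom_pmf, Binomial.C.
  pose proof (INR_fact_pos N). pose proof (INR_fact_pos m). pose proof (INR_fact_pos (N - m)).
  repeat apply Rmult_lt_0_compat; try apply pow_lt; try apply Rinv_0_lt_compat;
    try apply Rmult_lt_0_compat; lra.
Qed.

Lemma binom_pmf_le_fact N m q : 0 < q < 1 -> binom_pmf N m q <= INR (fact N).
Proof.
  intros Hq. unfold binom_pmf, Binomial.C.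
  pose proof (INR_fact_pos N).
  assert (1 <= INR (fact m)) by (apply (le_INR 1), lt_O_fact).
  assert (1 <= INR (fact (N - m))) by (apply (le_INR 1), lt_O_fact).
  assert (HC : 0 <= INR (fact N) / (INR (fact m) * INR (fact (N - m))) <= INR (fact N)).
  { assert (1 <= INR (fact m) * INR (fact (N - m))) by nra.
    split; [apply Rdiv_le_0_compat; lra|]. apply Rle_div_l; nra. }
  pose proof (pow_unit_interval q m ltac:(lra)) as Hqm.
  pose proof (pow_unit_interval (1 - q) (N - m) ltac:(lra)) as Hqr.
  pose proof (Rmult_le_compat _ _ _ _ (proj1 HC) (proj1 Hqm) (proj2 HC) (proj2 Hqm)).
  assert (0 <= INR (fact N) / (INR (fact m) * INR (fact (N - m))) * q ^ m) by nra.
  nra.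
Qed.

Lemma normal_peak_pos n q : 0 < n -> 0 < q < 1 -> 0 < normal_peak n q.
Proof.
  intros Hn Hq. pose proof PI_RGT_0. apply Rinv_0_lt_compat, sqrt_lt_R0.
  replace (2 * PI * n * q * (1 - q)) with ((2 * PI * n) * (q * (1 - q))) by ring.
  apply Rmult_lt_0_compat; nra.
Qed.

Lemma ln_normal_peak n q : 0 < n -> 0 < q < 1 ->
  ln (normal_peak n q) = - ln_sqrt_2PI - (ln n + ln q + ln (1 - q)) / 2.
Proof.
  intros Hn Hq. pose proof PI_RGT_0.
  assert (0 < 2 * PI * n * q * (1 - q)) by
    (replace (2 * PI * n * q * (1 - q)) with ((2 * PI * n) * (q * (1 - q))) by ring;
     apply Rmult_lt_0_compat; nra).
  unfold normal_peak, ln_sqrt_2PI. rewrite ln_Rinv, ln_sqrt by (try apply sqrt_lt_R0; lra).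
  rewrite !ln_mult by nra. field.
Qed.

Lemma normal_peak_scale n n' q : 0 < n -> 0 < n' -> 0 < q < 1 ->
  normal_peak n q = normal_peak n' q * sqrt (n' / n).
Proof.
  intros Hn Hn' Hq. pose proof PI_RGT_0.
  assert (0 < 2 * PI * q * (1 - q)) by (apply Rmult_lt_0_compat; nra).
  unfold normal_peak.
  replace (2 * PI * n * q * (1 - q)) with (n' * (2 * PI * q * (1 - q)) * (n / n')) by (field; lra).
  replace (2 * PI * n' * q * (1 - q)) with (n' * (2 * PI * q * (1 - q))) by ring.
  rewrite sqrt_mult_alt, Rinv_mult by (apply Rmult_le_pos; lra).
  f_equal. rewrite <- sqrt_inv. f_equal. field. lra.
Qed.

Lemma normal_peak_le n q : 1 <= n -> 0 < q < 1 -> normal_peak n q <= normal_peak 1 q.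
Proof.
  intros Hn Hq. rewrite (normal_peak_scale n 1 q) by lra.
  pose proof (normal_peak_pos 1 q ltac:(lra) Hq).
  assert (sqrt (1 / n) <= 1).
  { rewrite <- sqrt_1 at 2. apply sqrt_le_1_alt. apply Rle_div_l; lra. }
  pose proof (sqrt_pos (1 / n)). nra.
Qed.

Lemma entropy_chi2_bound x r q : 0 < x -> 0 < r -> 0 < q < 1 ->
  let n := x + r in
  0 <= x * ln (x / (n * q)) + r * ln (r / (n * (1 - q))) <= (x - n * q) ^ 2 / (n * q * (1 - q)).
Proof.
  intros Hx Hr Hq n.
  assert (Hn : 0 < n) by (unfold n; lra).
  assert (Ha : 0 < x / (n * q)) by (apply Rdiv_lt_0_compat; nra).
  assert (Hb : 0 < r / (n * (1 - q))) by (apply Rdiv_lt_0_compat; nra).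
  pose proof (ln_le_sub1 _ Ha). pose proof (ln_le_sub1 _ Hb).
  pose proof (one_sub_inv_le_ln _ Ha). pose proof (one_sub_inv_le_ln _ Hb).
  split.
  - apply Rle_trans with (x * (1 - / (x / (n * q))) + r * (1 - / (r / (n * (1 - q))))).
    + right. unfold n. field. repeat split; nra.
    + apply Rplus_le_compat; apply Rmult_le_compat_l; lra.
  - apply Rle_trans with (x * (x / (n * q) - 1) + r * (r / (n * (1 - q)) - 1)).
    + apply Rplus_le_compat; apply Rmult_le_compat_l; lra.
    + right. unfold n. field. repeat split; nra.
Qed.

Lemma ln_binom_pmf N m q : 0 < q < 1 ->
  ln (binom_pmf N m q) = ln (INR (fact N)) - ln (INR (fact m)) - ln (INR (fact (N - m)))
                         + INR m * ln q + INR (N - m) * ln (1 - q).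
Proof.
  intros Hq. unfold binom_pmf, Binomial.C.
  pose proof (INR_fact_pos N). pose proof (INR_fact_pos m). pose proof (INR_fact_pos (N - m)).
  assert (0 < q ^ m) by (apply pow_lt; lra).
  assert (0 < (1 - q) ^ (N - m)) by (apply pow_lt; lra).
  assert (0 < INR (fact N) / (INR (fact m) * INR (fact (N - m)))).
  { apply Rdiv_lt_0_compat; [|apply Rmult_lt_0_compat]; lra. }
  set (c := INR (fact N) / _) in *.
  rewrite ln_mult, ln_mult by (assumption || (apply Rmult_lt_0_compat; assumption)).
  unfold c. rewrite ln_div, ln_mult by (try apply Rmult_lt_0_compat; lra).
  rewrite !ln_pow by lra. ring.
Qed.

Lemma ln_binom_pmf_decomp N m q : (1 <= m)%nat -> (1 <= N - m)%nat -> 0 < q < 1 ->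
  let n := INR N in let x := INR m in let r := INR (N - m) in
  ln (binom_pmf N m q) - ln (normal_peak n q) =
    (stirling_err N - stirling_err m - stirling_err (N - m) + ln_sqrt_2PI)
    - ln (x * r / (n ^ 2 * (q * (1 - q)))) / 2
    - (x * ln (x / (n * q)) + r * ln (r / (n * (1 - q)))).
Proof.
  intros Hm Hr Hq n x r.
  assert (Hx : 0 < x) by (apply lt_0_INR; lia).
  assert (Hr' : 0 < r) by (apply lt_0_INR; lia).
  assert (Hn : n = x + r) by (unfold n, x, r; rewrite <- plus_INR; f_equal; lia).
  assert (Hnp : 0 < n) by lra.
  rewrite ln_normal_peak by lra.
  rewrite ln_binom_pmf by assumption.
  rewrite !ln_div, !ln_mult, ln_pow by first [lra | nra | apply Rmult_lt_0_compat; nra].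
  unfold stirling_err. fold n x r. rewrite Hn. replace (INR 2) with 2 by (simpl; ring). field.
Qed.

Lemma stirling_err_binom_bound N m : (1 <= m)%nat -> (1 <= N - m)%nat ->
  - (1 / INR m + 1 / INR (N - m))
  <= stirling_err N - stirling_err m - stirling_err (N - m) + ln_sqrt_2PI <= 1 / INR N.
Proof.
  intros Hm Hr.
  pose proof (stirling_err_lower N ltac:(lia)). pose proof (stirling_err_upper N ltac:(lia)).
  pose proof (stirling_err_lower m Hm). pose proof (stirling_err_upper m Hm).
  pose proof (stirling_err_lower (N - m) Hr). pose proof (stirling_err_upper (N - m) Hr).
  lra.
Qed.

Lemma prod_ratio_near_1 x r q : 0 < q < 1 -> 1 <= x + r -> Rabs (x - (x + r) * q) <= 1 ->
  let n := x + r in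
  Rabs (x * r / (n ^ 2 * (q * (1 - q))) - 1) <= 2 / (n * (q * (1 - q))).
Proof.
  intros Hq Hn Hdev n. fold n in Hn, Hdev. apply Rabs_le_between in Hdev.
  assert (HQ : 0 < q * (1 - q)) by nra.
  assert (Hr : r = n - x) by (unfold n; ring).
  replace (x * r / (n ^ 2 * (q * (1 - q))) - 1)
    with ((x - n * q) * (n * (1 - 2 * q) - (x - n * q)) / (n ^ 2 * (q * (1 - q))))
    by (rewrite Hr; field; repeat split; nra).
  assert (Hpos : 0 < n ^ 2 * (q * (1 - q))) by (apply Rmult_lt_0_compat; [apply pow_lt|]; lra).
  rewrite Rabs_div, (Rabs_pos_eq (n ^ 2 * _)) by (apply Rgt_not_eq || apply Rlt_le; exact Hpos).
  apply Rle_div_l; [exact Hpos|]. rewrite Rabs_mult.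
  replace (2 / (n * (q * (1 - q))) * (n ^ 2 * (q * (1 - q)))) with (1 * (2 * n)) by (field; nra).
  apply Rmult_le_compat; try apply Rabs_pos; apply Rabs_le_between; split; nra.
Qed.

Lemma ln_binom_pmf_near_mean N m q : 0 < q < 1 -> (m <= N)%nat ->
  4 < INR N * (q * (1 - q)) -> Rabs (INR m - INR N * q) <= 1 ->
  Rabs (ln (binom_pmf N m q) - ln (normal_peak (INR N) q)) <= (1 + 4 / (q * (1 - q))) / INR N.
Proof.
  intros Hq HmN HNQ Hdev.
  set (Q := q * (1 - q)) in *. assert (HQ : 0 < Q) by (unfold Q; nra).
  set (n := INR N) in *. set (x := INR m) in *. set (r := INR (N - m)).
  assert (Hn : n = x + r) by (unfold n, x, r; rewrite <- plus_INR; f_equal; lia).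
  assert (Hq1 : 4 < n * q) by (unfold Q in HNQ; nra).
  assert (Hq2 : 4 < n * (1 - q)) by (unfold Q in HNQ; nra).
  pose proof (proj1 (Rabs_le_between _ _) Hdev).
  assert (Hx : n * q / 2 <= x) by lra.
  assert (Hr : n * (1 - q) / 2 <= r) by lra.
  assert (Hinv : 1 / x + 1 / r <= 2 / (n * Q)).
  { replace (2 / (n * Q)) with (2 / (n * q) + 2 / (n * (1 - q))) by (unfold Q; field; nra).
    unfold Rdiv. rewrite !Rmult_1_l.
    replace (2 * / (n * q)) with (/ (n * q / 2)) by (field; nra).
    replace (2 * / (n * (1 - q))) with (/ (n * (1 - q) / 2)) by (field; nra).
    apply Rplus_le_compat; apply Rinv_le_contravar; lra. }
  assert (Hm1 : (1 <= m)%nat) by (apply INR_le; fold x; simpl; lra).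
  assert (Hr1 : (1 <= N - m)%nat) by (apply INR_le; fold r; simpl; lra).
  pose proof (stirling_err_binom_bound N m Hm1 Hr1) as HS. fold n x r in HS.
  pose proof (entropy_chi2_bound x r q ltac:(lra) ltac:(lra) Hq) as HG. rewrite <- Hn in HG.
  assert (HG' : (x - n * q) ^ 2 / (n * q * (1 - q)) <= 1 / (n * Q)).
  { unfold Q. rewrite <- Rmult_assoc. apply Rmult_le_compat_r; [left; apply Rinv_0_lt_compat; nra|].
    simpl. nra. }
  pose proof (prod_ratio_near_1 x r q Hq ltac:(nra) ltac:(rewrite <- Hn; exact Hdev)) as HX1.
  rewrite <- Hn in HX1. fold Q in HX1.
  assert (HX : Rabs (ln (x * r / (n ^ 2 * Q))) <= 2 * (2 / (n * Q))).
  { apply ln_near_1. split; [exact HX1|]. apply Rle_div_l; nra. }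
  pose proof (ln_le_sub1 (x * r / (n ^ 2 * Q)) ltac:(apply Rdiv_lt_0_compat; nra)).
  apply Rabs_le_between in HX, HX1.
  rewrite ln_binom_pmf_decomp by assumption. fold n x r Q.
  assert (0 < 1 / (n * Q)) by (apply Rdiv_lt_0_compat; nra).
  assert (0 < 1 / n) by (apply Rdiv_lt_0_compat; nra).
  replace ((1 + 4 / Q) / n) with (1 / n + 4 * (1 / (n * Q))) by (field; nra).
  replace (2 / (n * Q)) with (2 * (1 / (n * Q))) in * by (field; nra).
  apply Rabs_le_between. lra.
Qed.

Lemma binom_pmf_near_mode N m q : 0 < q < 1 -> (m <= N)%nat ->
  let K0 := 1 + 4 / (q * (1 - q)) in
  4 < INR N * (q * (1 - q)) -> K0 / INR N <= 1/2 -> Rabs (INR m - INR N * q) <= 1 ->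
  Rabs (binom_pmf N m q - normal_peak (INR (S N)) q) <= normal_peak 1 q * (4 * K0 + 1) / INR (S N).
Proof.
  intros Hq HmN K0 HNQ HK Hdev.
  assert (HQ : 0 < q * (1 - q)) by nra.
  assert (HN : 1 <= INR N).
  { destruct N as [|N]; [simpl in HNQ; lra|]. apply (le_INR 1); lia. }
  assert (HK0 : 0 < K0) by (unfold K0; pose proof (Rdiv_lt_0_compat 4 _ ltac:(lra) HQ); lra).
  rewrite S_INR in *.
  set (n := INR N) in *.
  set (e := ln (binom_pmf N m q) - ln (normal_peak n q)).
  assert (He : Rabs e <= K0 / n) by exact (ln_binom_pmf_near_mean N m q Hq HmN HNQ Hdev).
  pose proof (normal_peak_pos n q ltac:(lra) Hq) as Hp.
  assert (Hb : binom_pmf N m q = normal_peak n q * exp e).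
  { unfold e, Rminus. rewrite exp_plus, exp_Ropp, !exp_ln by (try apply binom_pmf_pos; lra).
    field. lra. }
  set (s := sqrt (n / (n + 1))).
  assert (Hs : 0 <= 1 - s <= 1 / (n + 1)).
  { replace (1 / (n + 1)) with (1 - n / (n + 1)) by (field; lra).
    apply one_sub_sqrt_le. split; [apply Rdiv_le_0_compat | apply Rle_div_l]; lra. }
  rewrite Hb, (normal_peak_scale (n + 1) n q) by lra. fold s.
  replace (normal_peak n q * exp e - normal_peak n q * s)
    with (normal_peak n q * ((exp e - 1) + (1 - s))) by ring.
  rewrite Rabs_mult, (Rabs_pos_eq (normal_peak n q)) by lra.
  pose proof (exp_near_0 e ltac:(lra)).
  assert (Hsum : Rabs ((exp e - 1) + (1 - s)) <= (4 * K0 + 1) / (n + 1)).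
  { eapply Rle_trans; [apply Rabs_triang|]. rewrite (Rabs_pos_eq (1 - s)) by lra.
    assert (K0 / n <= 2 * K0 / (n + 1)).
    { assert (0 <= K0 * (n - 1) / (n * (n + 1))) by (apply Rdiv_le_0_compat; nra).
      replace (2 * K0 / (n + 1)) with (K0 / n + K0 * (n - 1) / (n * (n + 1))) by (field; lra).
      lra. }
    replace ((4 * K0 + 1) / (n + 1)) with (2 * (2 * K0 / (n + 1)) + 1 / (n + 1)) by (field; lra).
    lra. }
  pose proof (normal_peak_le n q HN Hq).
  unfold Rdiv in *. rewrite Rmult_assoc.
  apply Rmult_le_compat; [lra | apply Rabs_pos | lra | exact Hsum].
Qed.

Lemma binom_pmf_near_mode_small N M m q : 0 < q < 1 -> (N <= M)%nat ->
  Rabs (binom_pmf N m q - normal_peak (INR (S N)) q)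
  <= (INR (fact M) + normal_peak 1 q) * INR (S M) / INR (S N).
Proof.
  intros Hq HNM.
  pose proof (binom_pmf_pos N m q Hq).
  assert (Hb : binom_pmf N m q <= INR (fact M))
    by (eapply Rle_trans; [apply binom_pmf_le_fact; lra | apply le_INR, fact_le; lia]).
  assert (HT : 0 < INR (S N)) by (apply lt_0_INR; lia).
  pose proof (normal_peak_pos (INR (S N)) q HT Hq).
  assert (normal_peak (INR (S N)) q <= normal_peak 1 q) by (apply normal_peak_le; [apply (le_INR 1); lia | lra]).
  assert (INR (S N) <= INR (S M)) by (apply le_INR; lia).
  apply Rle_trans with (INR (fact M) + normal_peak 1 q); [apply Rabs_le_between; lra|].
  apply Rle_div_r; [exact HT|]. apply Rmult_le_compat_l; lra.
Qed.

Lemma floor_le_pred q N m : 0 < q < 1 -> INR m <= INR (S N) * q -> (m <= N)%nat.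
Proof.
  intros Hq Hm. enough (Hlt : INR m < INR (S N)) by (apply INR_lt in Hlt; lia).
  rewrite S_INR in *. pose proof (pos_INR N). nra.
Qed.

(* De Moivre's identity expresses mean deficits through [binom_pmf (T - 1) m q], [m] the integer part of [T q]. *)
Definition mode_approx (q K : R) : Prop :=
  forall T m, (1 <= T)%nat -> INR m <= INR T * q < INR m + 1 ->
    Rabs (binom_pmf (T - 1) m q - normal_peak (INR T) q) <= K / INR T.

Lemma mode_approx_mono q K K' : K <= K' -> mode_approx q K -> mode_approx q K'.
Proof.
  intros HK H T m HT Hm. eapply Rle_trans; [apply H; assumption|].
  apply Rmult_le_compat_r; [|lra]. left. apply Rinv_0_lt_compat, lt_0_INR. lia.
Qed.

Lemma mode_approx_exists q : 0 < q < 1 -> exists K, 0 <= K /\ mode_approx q K.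
Proof.
  intros Hq. assert (HQ : 0 < q * (1 - q)) by nra.
  assert (H4Q : 0 < 4 / (q * (1 - q))) by (apply Rdiv_lt_0_compat; lra).
  set (K0 := 1 + 4 / (q * (1 - q))).
  assert (HK0 : 0 < K0) by (unfold K0; lra).
  set (P1 := normal_peak 1 q).
  assert (HP1 : 0 < P1) by (apply normal_peak_pos; lra).
  destruct (nfloor_ex (4 / (q * (1 - q)) + 2 * K0)) as [M HM]; [lra|].
  pose proof (INR_fact_pos M). pose proof (pos_INR M).
  set (Ksmall := (INR (fact M) + P1) * INR (S M)).
  exists (P1 * (4 * K0 + 1) + Ksmall). split; [unfold Ksmall; rewrite S_INR; nra|].
  intros T m HT Hm. destruct T as [|N]; [lia|]. replace (S N - 1)%nat with N by lia.
  assert (HTp : 0 < INR (S N)) by (apply lt_0_INR; lia).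
  assert (0 <= P1 * (4 * K0 + 1) / INR (S N)) by (apply Rdiv_le_0_compat; [nra | lra]).
  assert (0 <= Ksmall / INR (S N)) by (apply Rdiv_le_0_compat; [unfold Ksmall; rewrite S_INR; nra | lra]).
  rewrite Rdiv_plus_distr.
  destruct (le_lt_dec N M) as [Hsmall | Hlarge].
  - pose proof (binom_pmf_near_mode_small N M m q Hq Hsmall) as Happrox.
    fold P1 Ksmall in Happrox. lra.
  - pose proof (floor_le_pred q N m Hq (proj1 Hm)) as HmN.
    assert (HN : INR M + 1 <= INR N) by (rewrite <- S_INR; apply le_INR; lia).
    assert (4 < INR N * (q * (1 - q))).
    { apply (Rmult_lt_reg_r (/ (q * (1 - q)))); [apply Rinv_0_lt_compat; lra|].
      rewrite Rmult_assoc, Rinv_r by lra. unfold Rdiv in HM. lra. }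
    assert (K0 / INR N <= 1/2) by (apply Rle_div_l; lra).
    assert (Rabs (INR m - INR N * q) <= 1) by (apply Rabs_le_between; rewrite S_INR in Hm; lra).
    pose proof (binom_pmf_near_mode N m q Hq HmN ltac:(assumption) ltac:(assumption) ltac:(assumption))
      as Happrox.
    fold K0 P1 in Happrox. lra.
Qed.

(** * De Moivre's identity for the mean deficit *)

(* [binom_expect q T g = E g(X)] for [X ~ Bin(T, q)], defined by conditioning on the first draw. *)
Fixpoint binom_expect (q : R) (T : nat) (g : nat -> R) : R :=
  match T with
  | O => g O
  | S T' => q * binom_expect q T' (fun k => g (S k)) + (1 - q) * binom_expect q T' g
  end.

Definition binom_weight (q : R) (T k : nat) : R := if (k <=? T)%nat then binom_pmf T k q else 0.

Lemma C_n_0 n : Binomial.C n 0 = 1.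
Proof. unfold Binomial.C. rewrite Nat.sub_0_r. simpl. pose proof (INR_fact_pos n). field. lra. Qed.

Lemma C_n_n n : Binomial.C n n = 1.
Proof. unfold Binomial.C. rewrite Nat.sub_diag. simpl. pose proof (INR_fact_pos n). field. lra. Qed.

Lemma binom_weight_S_0 q T : binom_weight q (S T) 0 = (1 - q) * binom_weight q T 0.
Proof. unfold binom_weight, binom_pmf. simpl. rewrite !C_n_0, Nat.sub_0_r. ring. Qed.

Lemma binom_weight_S_S q T k :
  binom_weight q (S T) (S k) = q * binom_weight q T k + (1 - q) * binom_weight q T (S k).
Proof.
  unfold binom_weight, binom_pmf. simpl (S k <=? S T)%nat.
  destruct (Nat.leb_spec k T) as [Hk|Hk]; [destruct (Nat.leb_spec (S k) T) as [Hk'|Hk']|].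
  - rewrite <- pascal by lia.
    replace (S T - S k)%nat with (S (T - S k)) by lia.
    replace (T - k)%nat with (S (T - S k)) by lia. simpl. ring.
  - replace k with T by lia. rewrite !C_n_n, !Nat.sub_diag. simpl. ring.
  - destruct (Nat.leb_spec (S k) T); [lia|]. ring.
Qed.

Lemma binom_weight_out q T k : (T < k)%nat -> binom_weight q T k = 0.
Proof. intros. unfold binom_weight. destruct (Nat.leb_spec k T); [lia | reflexivity]. Qed.

Lemma binom_expect_sum q T g :
  binom_expect q T g = sum_f_R0 (fun k => binom_weight q T k * g k) T.
Proof.
  revert g. induction T as [|T IH]; intros g.
  - simpl. unfold binom_weight, binom_pmf. simpl. rewrite C_n_0. ring.
  - simpl binom_expect. rewrite !IH.
    rewrite (decomp_sum _ (S T)) by lia. simpl pred. rewrite binom_weight_S_0.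
    rewrite (sum_eq (fun i => binom_weight q (S T) (S i) * g (S i))
               (fun i => q * (binom_weight q T i * g (S i))
                         + (1 - q) * (binom_weight q T (S i) * g (S i))))
      by (intros; rewrite binom_weight_S_S; ring).
    rewrite plus_sum, !sum_f_R0_scal.
    assert (E : binom_weight q T 0 * g 0%nat + sum_f_R0 (fun i => binom_weight q T (S i) * g (S i)) T
                = sum_f_R0 (fun k => binom_weight q T k * g k) T).
    { destruct T.
      - simpl. rewrite (binom_weight_out q 0 1) by lia. ring.
      - rewrite (decomp_sum (fun k => binom_weight q (S T) k * g k) (S T)) by lia. simpl pred.
        rewrite tech5, (binom_weight_out q (S T) (S (S T))) by lia. ring. }
    rewrite <- E. ring.
Qed.

Lemma C_succ_mul_l N i : (i <= N)%nat ->
  INR (S i) * Binomial.C (S N) (S i) = INR (S N) * Binomial.C N i.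
Proof.
  intros. unfold Binomial.C. simpl (S N - S i)%nat.
  rewrite !fact_simpl, !mult_INR.
  pose proof (INR_fact_pos N). pose proof (INR_fact_pos i). pose proof (INR_fact_pos (N - i)).
  pose proof (lt_0_INR (S i) ltac:(lia)). pose proof (lt_0_INR (S N) ltac:(lia)).
  field. repeat split; lra.
Qed.

Lemma C_succ_mul_r N i : (i < N)%nat ->
  (INR N - INR i) * Binomial.C (S N) (S i) = INR (S N) * Binomial.C N (S i).
Proof.
  intros. unfold Binomial.C. simpl (S N - S i)%nat.
  replace (N - i)%nat with (S (N - S i)) by lia.
  rewrite !fact_simpl, !mult_INR.
  replace (INR (S (N - S i))) with (INR N - INR i) by (rewrite S_INR, minus_INR, S_INR by lia; ring).
  pose proof (INR_fact_pos N). pose proof (INR_fact_pos i). pose proof (INR_fact_pos (N - S i)).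
  pose proof (lt_0_INR (S i) ltac:(lia)). pose proof (lt_0_INR (S N) ltac:(lia)).
  assert (INR i < INR N) by (apply lt_INR; lia).
  field. repeat split; lra.
Qed.

Definition binom_weight_pred (q : R) (N k : nat) : R :=
  match k with O => 0 | S i => binom_weight q N i end.

(* De Moivre: the deviation-weighted binomial probabilities telescope. *)
Lemma binom_weight_dev q N k : (k <= S N)%nat ->
  binom_weight q (S N) k * (INR k - INR (S N) * q)
  = INR (S N) * q * (1 - q) * (binom_weight_pred q N k - binom_weight_pred q N (S k)).
Proof.
  intros Hk. unfold binom_weight_pred, binom_weight, binom_pmf. destruct k as [|i].
  - simpl. rewrite !C_n_0, Nat.sub_0_r. simpl. ring.
  - replace (S i <=? S N)%nat with true by (symmetry; apply Nat.leb_le; lia).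
    replace (i <=? N)%nat with true by (symmetry; apply Nat.leb_le; lia).
    replace (S N - S i)%nat with (N - i)%nat by lia.
    destruct (Nat.leb_spec (S i) N) as [Hi|Hi].
    + replace (N - i)%nat with (S (N - S i)) by lia.
      replace (INR (S i) - INR (S N) * q) with (INR (S i) * (1 - q) - (INR N - INR i) * q)
        by (rewrite !S_INR; ring).
      transitivity ((INR (S i) * Binomial.C (S N) (S i)) * q ^ S i * (1 - q) ^ S (N - S i) * (1 - q)
                    - ((INR N - INR i) * Binomial.C (S N) (S i)) * q ^ S i * (1 - q) ^ S (N - S i) * q);
        [ring|].
      rewrite C_succ_mul_l, C_succ_mul_r by lia. simpl. ring.
    + replace i with N by lia. rewrite Nat.sub_diag, !C_n_n. simpl. ring.
Qed.

Section Deficit.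

Variables (q : R) (N m : nat).
Hypothesis Hq : 0 < q < 1.
Hypothesis Hm : INR m <= INR (S N) * q < INR m + 1.

Let c := INR (S N) * q.

Lemma floor_mean_pos : 0 < c.
Proof. unfold c. rewrite S_INR. pose proof (pos_INR N). nra. Qed.

Lemma sum_binom_weight_deficit n : (n <= S N)%nat ->
  sum_f_R0 (fun k => binom_weight q (S N) k * Rmax 0 (c - INR k)) n
  = c * (1 - q) * binom_weight q N (Nat.min n m).
Proof.
  pose proof (floor_le_pred q N m Hq (proj1 Hm)). pose proof floor_mean_pos.
  induction n as [|n IH]; intros Hn.
  - cbn [sum_f_R0 Nat.min]. rewrite Rmax_right by (simpl; lra).
    pose proof (binom_weight_dev q N 0 ltac:(lia)) as E. cbn [binom_weight_pred] in E.
    fold c in E. simpl INR in *. lra.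
  - rewrite tech5, IH by lia.
    destruct (Nat.leb_spec (S n) m) as [H1|H1].
    + replace (Nat.min (S n) m) with (S n) by lia. replace (Nat.min n m) with n by lia.
      assert (INR (S n) <= c) by (apply Rle_trans with (INR m); [apply le_INR; lia | apply Hm]).
      rewrite Rmax_right by lra.
      pose proof (binom_weight_dev q N (S n) ltac:(lia)) as E. simpl binom_weight_pred in E.
      fold c in E. lra.
    + replace (Nat.min (S n) m) with m by lia. replace (Nat.min n m) with m by lia.
      assert (c < INR (S n)) by (apply Rlt_le_trans with (INR m + 1); [apply Hm | rewrite <- S_INR; apply le_INR; lia]).
      rewrite Rmax_left by lra. ring.
Qed.

Lemma sum_binom_weight_excess n : (n <= S N)%nat ->
  sum_f_R0 (fun k => binom_weight q (S N) k * Rmax 0 (INR k - c)) n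
  = c * (1 - q) * (binom_weight q N m - binom_weight q N (Nat.max n m)).
Proof.
  pose proof (floor_le_pred q N m Hq (proj1 Hm)). pose proof floor_mean_pos.
  induction n as [|n IH]; intros Hn.
  - cbn [sum_f_R0]. rewrite Rmax_left by (simpl; lra). replace (Nat.max 0 m) with m by lia. ring.
  - rewrite tech5, IH by lia.
    destruct (Nat.leb_spec (S n) m) as [H1|H1].
    + replace (Nat.max (S n) m) with m by lia. replace (Nat.max n m) with m by lia.
      assert (INR (S n) <= c) by (apply Rle_trans with (INR m); [apply le_INR; lia | apply Hm]).
      rewrite Rmax_left by lra. ring.
    + replace (Nat.max (S n) m) with (S n) by lia. replace (Nat.max n m) with n by lia.
      assert (c < INR (S n)) by (apply Rlt_le_trans with (INR m + 1); [apply Hm | rewrite <- S_INR; apply le_INR; lia]).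
      rewrite Rmax_right by lra.
      pose proof (binom_weight_dev q N (S n) ltac:(lia)) as E. simpl binom_weight_pred in E.
      fold c in E. lra.
Qed.

Lemma binom_expect_deficit :
  binom_expect q (S N) (fun k => Rmax 0 (1 - INR k / INR (S N) / q)) = (1 - q) * binom_pmf N m q.
Proof.
  pose proof (floor_le_pred q N m Hq (proj1 Hm)). pose proof floor_mean_pos.
  rewrite binom_expect_sum.
  rewrite (sum_eq _ (fun k => / c * (binom_weight q (S N) k * Rmax 0 (c - INR k)))).
  - rewrite sum_f_R0_scal, sum_binom_weight_deficit, Nat.min_r by lia.
    unfold binom_weight. replace (m <=? N)%nat with true by (symmetry; apply Nat.leb_le; lia).
    field. lra.
  - intros k _. unfold c in *.
    replace (1 - INR k / INR (S N) / q) with ((INR (S N) * q - INR k) / (INR (S N) * q)) by (field; nra).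
    assert (0 < INR (S N)) by (apply lt_0_INR; lia).
    rewrite Rmax_0_div by lra. field. split; lra.
Qed.

Lemma binom_expect_deficit_excess :
  binom_expect q (S N) (fun k => Rmax 0 (c - INR k) / c + Rmax 0 (INR k - c) / (INR (S N) * (1 - q)))
  = binom_pmf N m q.
Proof.
  pose proof (floor_le_pred q N m Hq (proj1 Hm)). pose proof floor_mean_pos.
  assert (0 < INR (S N)) by (apply lt_0_INR; lia).
  rewrite binom_expect_sum.
  rewrite (sum_eq _ (fun k => / c * (binom_weight q (S N) k * Rmax 0 (c - INR k))
                              + / (INR (S N) * (1 - q)) * (binom_weight q (S N) k * Rmax 0 (INR k - c))))
    by (intros; unfold Rdiv; ring).
  rewrite plus_sum, !sum_f_R0_scal, sum_binom_weight_deficit, sum_binom_weight_excess, Nat.min_r, Nat.max_l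
    by lia.
  rewrite (binom_weight_out q N (S N)) by lia.
  unfold binom_weight. replace (m <=? N)%nat with true by (symmetry; apply Nat.leb_le; lia).
  unfold c. field. split; lra.
Qed.

End Deficit.

(* [p_A]; for a mask [b], [mass l p (fun j => nth j b false)] is [p_S l p b] by conversion. *)
Definition mass (l : nat) (p : nat -> R) (A : nat -> bool) : R :=
  sumR (map (fun j => if A j then p j else 0) (seq 0 l)).

Lemma mass_pos l p A : (forall j, (j < l)%nat -> 0 < p j) ->
  (exists j, (j < l)%nat /\ A j = true) -> 0 < mass l p A.
Proof.
  intros Hp [j [Hj HA]]. unfold mass.
  apply Rlt_le_trans with (if A j then p j else 0); [rewrite HA; auto|].
  apply (sumR_map_ge_term (fun j => if A j then p j else 0)); [apply in_seq; lia|].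
  intros y Hy. apply in_seq in Hy. destruct (A y); [left; apply Hp; lia | lra].
Qed.

Lemma mass_compl l p A : sumR (map p (seq 0 l)) = 1 -> mass l p (fun j => negb (A j)) = 1 - mass l p A.
Proof.
  intros H. unfold mass. rewrite <- H.
  rewrite (sumR_map_ext_in p (fun j => (if A j then p j else 0) + (if negb (A j) then p j else 0)))
    by (intros j _; destruct (A j); simpl; ring).
  rewrite sumR_map_plus. ring.
Qed.

Lemma all_seqs_spec l T s : In s (all_seqs l T) -> length s = T /\ (forall j, In j s -> (j < l)%nat).
Proof.
  revert s. induction T as [|T IH]; intros s Hs; simpl in Hs.
  - destruct Hs as [<-|[]]. split; [reflexivity | intros j []].
  - apply in_flat_map in Hs. destruct Hs as [s' [Hs' Hin]]. apply in_map_iff in Hin.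
    destruct Hin as [j [<- Hj]]. apply in_seq in Hj. destruct (IH s' Hs') as [L1 L2].
    simpl. split; [congruence|]. intros i [<-|Hi]; [lia | auto].
Qed.

Lemma seq_prob_nonneg l p s : (forall j, (j < l)%nat -> 0 < p j) ->
  (forall j, In j s -> (j < l)%nat) -> 0 <= seq_prob p s.
Proof.
  intros Hp. induction s as [|a s IH]; intros H; simpl; [lra|].
  assert (0 < p a) by (apply Hp, H; simpl; auto).
  assert (0 <= seq_prob p s) by (apply IH; intros; apply H; simpl; auto).
  unfold seq_prob in *. nra.
Qed.

Lemma expect_count_binomial l p A (hsum : sumR (map p (seq 0 l)) = 1) T g :
  sumR (map (fun s => seq_prob p s * g (length (filter A s))) (all_seqs l T))
  = binom_expect (mass l p A) T g.
Proof.
  revert g. induction T as [|T IH]; intros g; [simpl; unfold seq_prob; simpl; ring|].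
  simpl all_seqs. rewrite sumR_flat_map. simpl binom_expect. rewrite <- !IH.
  rewrite <- !sumR_map_scal, <- sumR_map_plus.
  apply sumR_map_ext_in. intros s _. rewrite map_map.
  pose proof (mass_compl l p A hsum) as Hc. unfold mass in Hc |- *.
  rewrite (sumR_map_ext_in _ (fun j => seq_prob p s * g (S (length (filter A s))) * (if A j then p j else 0)
                                     + seq_prob p s * g (length (filter A s)) * (if negb (A j) then p j else 0)))
    by (intros j _; unfold seq_prob; simpl; destruct (A j); simpl; ring).
  rewrite sumR_map_plus, !sumR_map_scal, Hc. ring.
Qed.

Lemma count_occ_filter s j : count_occ Nat.eq_dec s j = length (filter (fun i => i =? j) s).
Proof.
  induction s as [|a s IH]; simpl; [reflexivity|].
  destruct (Nat.eq_dec a j) as [->|Hn]; rewrite ?Nat.eqb_refl; simpl; [congruence|].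
  apply Nat.eqb_neq in Hn. rewrite Hn. exact IH.
Qed.

Lemma sumR_count_occ (A : nat -> bool) l s : (forall j, In j s -> (j < l)%nat) ->
  sumR (map (fun j => INR (count_occ Nat.eq_dec s j)) (filter A (seq 0 l))) = INR (length (filter A s)).
Proof.
  rewrite sumR_map_filter. induction s as [|x s IH]; intros H.
  - simpl. rewrite (sumR_map_ext_in _ (fun _ => 0)) by (intros j _; destruct (A j); reflexivity).
    rewrite sumR_map_const. ring.
  - assert (Hx : (x < l)%nat) by (apply H; simpl; auto).
    rewrite (sumR_map_ext_in _ (fun j => (if x =? j then (if A j then 1 else 0) else 0)
                                        + (if A j then INR (count_occ Nat.eq_dec s j) else 0))).
    + rewrite sumR_map_plus, sumR_indicator_seq, IH by (intros; apply H; simpl; auto).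
      rewrite (proj2 (Nat.leb_le 0 x)), (proj2 (Nat.ltb_lt x (0 + l))) by lia. cbn [andb filter].
      destruct (A x); cbn [length]; rewrite ?S_INR; ring.
    + intros j _. simpl. destruct (Nat.eq_dec x j) as [->|Hn].
      * rewrite Nat.eqb_refl. destruct (A j); rewrite ?S_INR; ring.
      * apply Nat.eqb_neq in Hn. rewrite Hn. destruct (A j); ring.
Qed.

(** * Bounds on the separation distance *)

Lemma maxn_R_ge F l j : (j < l)%nat -> F j <= maxn_R F l.
Proof. intros. apply fold_Rmax_ge, in_seq. lia. Qed.

Lemma maxn_R_le_sum F l : (1 <= l)%nat ->
  maxn_R F l <= sumR (map (fun j => Rmax 0 (F j)) (seq 0 l)).
Proof.
  intros Hl.
  assert (Hterm : forall j, In j (seq 0 l) -> F j <= sumR (map (fun j => Rmax 0 (F j)) (seq 0 l))).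
  { intros j Hj. eapply Rle_trans; [apply (Rmax_r 0)|].
    apply (sumR_map_ge_term (fun j => Rmax 0 (F j))); [exact Hj | intros; apply Rmax_l]. }
  apply fold_Rmax_le; [apply Hterm, in_seq; lia | exact Hterm].
Qed.

Section Separation.

Variables (l : nat) (p : nat -> R) (s : list nat).
Hypothesis Hp : forall j, (j < l)%nat -> 0 < p j.
Hypothesis Hs : forall j, In j s -> (j < l)%nat.
Hypothesis Hlen : (1 <= length s)%nat.

Let T := INR (length s).

(* Some outcome of [A] is under-represented at least as much as [A] as a whole. *)
Lemma sep_dist_ge_deficit A : (exists j, (j < l)%nat /\ A j = true) ->
  1 - INR (length (filter A s)) / T / mass l p A <= sep_dist l (emp s) p.
Proof.
  intros Hex. pose proof (mass_pos l p A Hp Hex) as Hq.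
  assert (HT : 0 < T) by (apply lt_0_INR; lia).
  set (r := INR (length (filter A s)) / T / mass l p A).
  destruct (exists_le_of_sumR_le (emp s) p r (filter A (seq 0 l))) as [j [Hj Hle]].
  - destruct Hex as [j [Hj HA]]. intros E.
    assert (Hin : In j (filter A (seq 0 l))) by (apply filter_In; split; [apply in_seq; lia | exact HA]).
    rewrite E in Hin. contradiction.
  - unfold emp. rewrite (sumR_map_ext_in _ (fun j => / T * INR (count_occ Nat.eq_dec s j)))
      by (intros; unfold T, Rdiv; ring).
    rewrite sumR_map_scal, sumR_count_occ, sumR_map_filter by exact Hs.
    fold (mass l p A). unfold r. right. field. lra.
  - apply filter_In in Hj as [Hj _]. apply in_seq in Hj.
    pose proof (Hp j ltac:(lia)).
    eapply Rle_trans; [|apply (maxn_R_ge (fun j => 1 - emp s j / p j) l j); lia].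
    cbv beta. assert (emp s j / p j <= r) by (apply Rle_div_l; lra).
    lra.
Qed.

(* The deficit of [A] is the excess of its complement; at most one of the two is positive. *)
Lemma sep_dist_ge_deficit_excess A : sumR (map p (seq 0 l)) = 1 ->
  (exists j, (j < l)%nat /\ A j = true) -> (exists j, (j < l)%nat /\ A j = false) ->
  let q := mass l p A in let c := T * q in
  Rmax 0 (c - INR (length (filter A s))) / c + Rmax 0 (INR (length (filter A s)) - c) / (T * (1 - q))
  <= sep_dist l (emp s) p.
Proof.
  intros hsum Hex1 Hex2 q c.
  assert (Hex2' : exists j, (j < l)%nat /\ negb (A j) = true)
    by (destruct Hex2 as [j [H1 H2]]; exists j; rewrite H2; auto).
  pose proof (sep_dist_ge_deficit A Hex1) as L1.
  pose proof (sep_dist_ge_deficit _ Hex2') as L2.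
  pose proof (mass_pos l p A Hp Hex1) as Hq1. pose proof (mass_pos l p _ Hp Hex2') as Hq2.
  rewrite mass_compl in L2, Hq2 by exact hsum. fold q in L1, L2, Hq1, Hq2.
  assert (HT : 0 < T) by (apply lt_0_INR; lia).
  assert (HX : INR (length (filter (fun j => negb (A j)) s)) = T - INR (length (filter A s))).
  { unfold T. rewrite <- (filter_length A s), plus_INR. ring. }
  rewrite HX in L2. set (X := INR (length (filter A s))) in *.
  assert (Hc : 0 < c) by (unfold c; nra).
  replace (1 - X / T / q) with ((c - X) / c) in L1 by (unfold c; field; split; lra).
  replace (1 - (T - X) / T / (1 - q)) with ((X - c) / (T * (1 - q))) in L2 by (unfold c; field; split; lra).
  destruct (Rle_dec X c) as [HXc | HXc].
  - rewrite (Rmax_right 0 (c - X)), (Rmax_left 0 (X - c)) by lra. unfold Rdiv at 2. lra.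
  - rewrite (Rmax_left 0 (c - X)), (Rmax_right 0 (X - c)) by lra. unfold Rdiv at 1. lra.
Qed.

End Separation.

Lemma rho1_eq q : 0 < q < 1 -> rho1 q = (1 - q) / sqrt (q * (1 - q)).
Proof.
  intros Hq. unfold rho1.
  replace ((1 - q) / q) with ((1 - q) ^ 2 / (q * (1 - q))) by (field; lra).
  rewrite sqrt_div_alt, sqrt_pow2 by (try apply Rmult_lt_0_compat; lra). reflexivity.
Qed.

Lemma rho2_eq q : 0 < q < 1 -> rho2 q = / sqrt (q * (1 - q)).
Proof.
  intros Hq. unfold rho2. rewrite !rho1_eq by lra.
  replace (1 - (1 - q)) with q by ring. rewrite (Rmult_comm (1 - q) q).
  assert (0 < sqrt (q * (1 - q))) by (apply sqrt_lt_R0; nra).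
  field. lra.
Qed.

Lemma normal_peak_split n q : 0 < n -> 0 < q < 1 ->
  normal_peak n q = sqrt (1 / (2 * PI * n)) * / sqrt (q * (1 - q)).
Proof.
  intros Hn Hq. pose proof PI_RGT_0. unfold normal_peak.
  replace (2 * PI * n * q * (1 - q)) with ((2 * PI * n) * (q * (1 - q))) by ring.
  rewrite sqrt_mult_alt, Rinv_mult, <- sqrt_inv by nra.
  unfold Rdiv. rewrite Rmult_1_l. reflexivity.
Qed.

Lemma mass_single l p j : (j < l)%nat -> mass l p (fun i => i =? j) = p j.
Proof.
  intros Hj. unfold mass.
  rewrite (sumR_map_ext_in _ (fun i => if j =? i then p i else 0)) by (intros; rewrite Nat.eqb_sym; auto).
  rewrite sumR_indicator_seq, (proj2 (Nat.leb_le 0 j)), (proj2 (Nat.ltb_lt j (0 + l))) by lia.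
  reflexivity.
Qed.

Lemma all_masks_length n b : In b (all_masks n) -> length b = n.
Proof.
  revert b. induction n as [|n IH]; intros b Hb; simpl in Hb.
  - destruct Hb as [<-|[]]. reflexivity.
  - apply in_flat_map in Hb. destruct Hb as [b' [Hb' Hin]]. simpl in Hin.
    destruct Hin as [<-|[<-|[]]]; simpl; rewrite IH; auto.
Qed.

Lemma mask_true_witness b : (1 <= mask_card b)%nat ->
  exists j, (j < length b)%nat /\ nth j b false = true.
Proof.
  unfold mask_card. induction b as [|x b IH]; simpl; intros H; [lia|].
  destruct (Bool.bool_dec x true) as [->|Hn]; [exists 0%nat; split; [lia | reflexivity]|].
  destruct (IH H) as [j [Hj1 Hj2]]. exists (S j). split; [lia | exact Hj2].
Qed.

Lemma mask_false_witness b : (mask_card b < length b)%nat ->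
  exists j, (j < length b)%nat /\ nth j b false = false.
Proof.
  unfold mask_card. induction b as [|x b IH]; simpl; intros H; [lia|].
  destruct (Bool.bool_dec x true) as [->|Hn].
  - destruct (IH ltac:(lia)) as [j [Hj1 Hj2]]. exists (S j). split; [lia | exact Hj2].
  - exists 0%nat. split; [lia|]. destruct x; [congruence | reflexivity].
Qed.

Lemma proper_mask_witnesses l b :
  In b (filter (fun b => andb (Nat.leb 1 (mask_card b)) (Nat.ltb (mask_card b) l)) (all_masks l)) ->
  (exists j, (j < l)%nat /\ nth j b false = true) /\ (exists j, (j < l)%nat /\ nth j b false = false).
Proof.
  intros Hb. apply filter_In in Hb as [Hb Hc].
  apply Bool.andb_true_iff in Hc as [Hc1 Hc2]. apply Nat.leb_le in Hc1. apply Nat.ltb_lt in Hc2.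
  rewrite <- (all_masks_length l b Hb) in *. split.
  - apply mask_true_witness. exact Hc1.
  - apply mask_false_witness. exact Hc2.
Qed.

Section Bounds.

Variables (l : nat) (p : nat -> R).
Hypothesis hp : forall j, (j < l)%nat -> 0 < p j < 1.
Hypothesis hsum : sumR (map p (seq 0 l)) = 1.

Let hp' : forall j, (j < l)%nat -> 0 < p j.
Proof. intros; apply hp; assumption. Qed.

Lemma one_le_l : (1 <= l)%nat.
Proof. destruct l; [simpl in hsum; lra | lia]. Qed.

Lemma expect_deficit_single j K T : (j < l)%nat -> mode_approx (p j) K -> (1 <= T)%nat ->
  sumR (map (fun s => seq_prob p s * Rmax 0 (1 - emp s j / p j)) (all_seqs l T))
  <= rho1 (p j) * sqrt (1 / (2 * PI * INR T)) + K / INR T.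
Proof.
  intros Hj HK HT. pose proof (hp j Hj) as Hq.
  assert (HTp : 0 < INR T) by (apply lt_0_INR; lia).
  rewrite (sumR_map_ext_in _
    (fun s => seq_prob p s * (fun k => Rmax 0 (1 - INR k / INR T / p j)) (length (filter (fun i => i =? j) s)))).
  2:{ intros s Hs. destruct (all_seqs_spec l T s Hs) as [Hlen _].
      unfold emp. rewrite count_occ_filter, Hlen. reflexivity. }
  rewrite (expect_count_binomial l p (fun i => i =? j) hsum T (fun k => Rmax 0 (1 - INR k / INR T / p j))).
  rewrite mass_single by assumption.
  destruct (nfloor_ex (INR T * p j)) as [m Hm]; [nra|].
  destruct T as [|N]; [lia|].
  rewrite (binom_expect_deficit (p j) N m Hq Hm).
  pose proof (HK (S N) m HT Hm) as B. replace (S N - 1)%nat with N in B by lia.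
  apply Rabs_le_between in B.
  replace (rho1 (p j) * sqrt (1 / (2 * PI * INR (S N)))) with ((1 - p j) * normal_peak (INR (S N)) (p j))
    by (rewrite normal_peak_split, rho1_eq by lra; unfold Rdiv; ring).
  assert (0 <= K / INR (S N)) by lra.
  nra.
Qed.

Lemma exp_sep_upper : exists C, 0 <= C /\ forall T, (1 <= T)%nat ->
  exp_sep l p T <= c_s l p * sqrt (1 / (2 * PI * INR T)) + C / INR T.
Proof.
  destruct (uniform_bound (fun j K => mode_approx (p j) K) (seq 0 l)) as [K [HK HKj]].
  { intros j K K'. apply mode_approx_mono. }
  { intros j Hj. apply in_seq in Hj. apply mode_approx_exists, hp. lia. }
  exists (INR l * K). split; [apply Rmult_le_pos; [apply pos_INR | exact HK]|].
  intros T HT. unfold exp_sep.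
  eapply Rle_trans.
  { apply sumR_map_le. intros s Hs. destruct (all_seqs_spec l T s Hs) as [_ Hin].
    apply Rmult_le_compat_l; [apply (seq_prob_nonneg l); auto|].
    apply (maxn_R_le_sum (fun j => 1 - emp s j / p j) l one_le_l). }
  rewrite (sumR_map_ext_in _ (fun s => sumR (map (fun j => seq_prob p s * Rmax 0 (1 - emp s j / p j)) (seq 0 l))))
    by (intros; rewrite <- sumR_map_scal; reflexivity).
  rewrite sumR_swap.
  eapply Rle_trans.
  { apply sumR_map_le. intros j Hj.
    apply expect_deficit_single; [apply in_seq in Hj; lia | apply HKj; exact Hj | exact HT]. }
  rewrite sumR_map_plus. unfold c_s.
  rewrite (sumR_map_ext_in (fun j => rho1 (p j) * _) (fun j => sqrt (1 / (2 * PI * INR T)) * rho1 (p j)))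
    by (intros; ring).
  rewrite sumR_map_scal, sumR_map_const, length_seq. right. unfold Rdiv. ring.
Qed.

Lemma mass_in_unit_interval A :
  (exists j, (j < l)%nat /\ A j = true) -> (exists j, (j < l)%nat /\ A j = false) ->
  0 < mass l p A < 1.
Proof.
  intros Hex1 [j [Hj HA]].
  pose proof (mass_pos l p A hp' Hex1).
  pose proof (mass_pos l p (fun i => negb (A i)) hp' ltac:(exists j; rewrite HA; auto)).
  rewrite mass_compl in * by exact hsum. lra.
Qed.

Lemma exp_sep_ge_subset A K T :
  (exists j, (j < l)%nat /\ A j = true) -> (exists j, (j < l)%nat /\ A j = false) ->
  mode_approx (mass l p A) K -> (1 <= T)%nat ->
  rho2 (mass l p A) * sqrt (1 / (2 * PI * INR T)) - K / INR T <= exp_sep l p T.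
Proof.
  intros Hex1 Hex2 HK HT.
  pose proof (mass_in_unit_interval A Hex1 Hex2) as Hq. set (q := mass l p A) in *.
  assert (HTp : 0 < INR T) by (apply lt_0_INR; lia).
  set (h := fun k => Rmax 0 (INR T * q - INR k) / (INR T * q)
                     + Rmax 0 (INR k - INR T * q) / (INR T * (1 - q))).
  assert (L : sumR (map (fun s => seq_prob p s * h (length (filter A s))) (all_seqs l T)) <= exp_sep l p T).
  { apply sumR_map_le. intros s Hs. destruct (all_seqs_spec l T s Hs) as [Hlen Hin].
    apply Rmult_le_compat_l; [apply (seq_prob_nonneg l); auto|].
    unfold h, q. rewrite <- Hlen. apply sep_dist_ge_deficit_excess; auto; lia. }
  rewrite (expect_count_binomial l p A hsum T h) in L. fold q in L.
  destruct (nfloor_ex (INR T * q)) as [m Hm]; [nra|].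
  destruct T as [|N]; [lia|].
  unfold h in L. rewrite (binom_expect_deficit_excess q N m Hq Hm) in L.
  pose proof (HK (S N) m HT Hm) as B. replace (S N - 1)%nat with N in B by lia.
  apply Rabs_le_between in B.
  replace (rho2 q * sqrt (1 / (2 * PI * INR (S N)))) with (normal_peak (INR (S N)) q)
    by (rewrite normal_peak_split, rho2_eq by lra; ring).
  lra.
Qed.

Lemma exp_sep_nonneg T : (1 <= T)%nat -> 0 <= exp_sep l p T.
Proof.
  intros HT. unfold exp_sep. apply sumR_map_nonneg. intros s Hs.
  destruct (all_seqs_spec l T s Hs) as [Hlen Hin].
  apply Rmult_le_pos; [apply (seq_prob_nonneg l); auto|].
  pose proof (sep_dist_ge_deficit l p s hp' Hin ltac:(lia) (fun _ => true)
                ltac:(exists 0%nat; split; [apply one_le_l | reflexivity])) as L.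
  rewrite List.filter_true in L. change (mass l p (fun _ => true)) with (sumR (map p (seq 0 l))) in L.
  rewrite hsum in L. assert (0 < INR (length s)) by (apply lt_0_INR; lia).
  replace (1 - INR (length s) / INR (length s) / 1) with 0 in L by (field; lra). exact L.
Qed.

Lemma exp_sep_lower : exists Ct, 0 <= Ct /\ forall T, (1 <= T)%nat ->
  ct_s l p * sqrt (1 / (2 * PI * INR T)) - Ct / INR T <= exp_sep l p T.
Proof.
  set (masks := filter (fun b => andb (Nat.leb 1 (mask_card b)) (Nat.ltb (mask_card b) l)) (all_masks l)).
  destruct (uniform_bound (fun b K => mode_approx (p_S l p b) K) masks) as [K [HK HKb]].
  { intros b K K'. apply mode_approx_mono. }
  { intros b Hb. destruct (proper_mask_witnesses l b Hb) as [H1 H2].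
    apply mode_approx_exists, (mass_in_unit_interval (fun j => nth j b false)); assumption. }
  exists K. split; [exact HK|]. intros T HT.
  assert (Hsq : 0 < sqrt (1 / (2 * PI * INR T))).
  { apply sqrt_lt_R0, Rdiv_lt_0_compat; [lra|]. pose proof PI_RGT_0.
    pose proof (lt_0_INR T ltac:(lia)). nra. }
  assert (HKT : 0 <= K / INR T) by (apply Rdiv_le_0_compat; [exact HK | apply lt_0_INR; lia]).
  enough (Hct : ct_s l p <= (exp_sep l p T + K / INR T) / sqrt (1 / (2 * PI * INR T)))
    by (apply Rle_div_r in Hct; lra).
  apply fold_Rmax_le.
  - apply Rdiv_le_0_compat; [pose proof (exp_sep_nonneg T HT) | ]; lra.
  - intros b Hb. destruct (proper_mask_witnesses l b Hb) as [H1 H2].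
    apply Rle_div_r; [exact Hsq|].
    pose proof (exp_sep_ge_subset (fun j => nth j b false) K T H1 H2 (HKb b Hb) HT) as Hb'.
    change (mass l p (fun j => nth j b false)) with (p_S l p b) in Hb'. lra.
Qed.

End Bounds.

Theorem mainTheorem2 (l : nat) (p : nat -> R)
  (hp : forall j, (j < l)%nat -> 0 < p j < 1)
  (hsum : sumR (map p (seq 0 l)) = 1) :
  exists C Ct : R, 0 <= C /\ 0 <= Ct /\
    forall T : nat, (1 <= T)%nat ->
      ct_s l p * sqrt (1 / (2 * PI * INR T)) - Ct / INR T <= exp_sep l p T /\
      exp_sep l p T <= c_s l p * sqrt (1 / (2 * PI * INR T)) + C / INR T.
Proof.
  destruct (exp_sep_upper l p hp hsum) as [C [HC Hupper]].
  destruct (exp_sep_lower l p hp hsum) as [Ct [HCt Hlower]].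
  exists C, Ct. repeat split; auto.
Qed.
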